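(* Let $(E,\mathscr{T},\le)$ be a completely regularly ordered space, let $\beta:E\to(\beta E,\mathscr{T}_\beta,\le_\beta)$ be the Stone–Čech compactification endowed with the preorder $G(\le_\beta)=\bigcap_{f\in\mathcal{F}}G_{\tilde f}$ ($\mathcal{F}$ the family of continuous isotone functions $f:E\to[0,1]$, $\tilde f$ the unique continuous extension of $f\circ\beta^{-1}$ to $\beta E$), and let $\Pi:\beta E\to\beta E/\!\sim_\beta$ be the quotient projection onto the $T_2$-ordered space $(\beta E/\!\sim_\beta,\mathscr{T}_\beta/\!\sim_\beta,\lesssim_\beta)$. Then $\Pi\circ\beta:E\to\beta E/\!\sim_\beta$ is a $T_2$-order compactification equivalent to the Nachbin $T_2$-order compactification $n:E\to nE$.
   Context: A topological ordered space $(E,\mathscr{T},\le)$ is completely regularly ordered if $\le$ is an order, $\mathscr{T}$ is the initial topology of the continuous isotone functions $E\to[0,1]$, and $x\le y$ iff $f(x)\le f(y)$ for all such functions. Isotone: $x\le y\Rightarrow f(x)\le f(y)$; $G_f=\{(x,y):f(x)\le f(y)\}$. $x\sim_\beta y$ means $x\le_\beta y$ and $y\le_\beta x$; the quotient carries the quotient topology and the order $[x]\lesssim_\beta[y]$ iff $x\le_\beta y$. $T_2$-ordered: order with closed graph. A $T_2$-order compactification of $E$ is a map $c:E\to cE$ into a compact Hausdorff $T_2$-ordered space, which is a homeomorphism onto its dense image and is isotone with isotone inverse on the image. $c_1\le c_2$ means there is a continuous isotone $C:c_2E\to c_1E$ with $C\circ c_2=c_1$; equivalent: both directions. The Nachbin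 $T_2$-order compactification is the (unique up to equivalence) $T_2$-order compactification $n:E\to nE$ to which every continuous isotone function $E\to[0,1]$ extends as a continuous isotone function. *)

From HB Require Import structures.
From mathcomp Require Import all_boot all_order all_algebra.
From mathcomp Require Import generic_quotient.
From mathcomp Require Import all_classical all_reals all_analysis.
Import numFieldTopology.Exports numFieldNormedType.Exports.
Set Implicit Arguments. Unset Strict Implicit. Unset Printing Implicit Defensive.
Import Order.TTheory GRing.Theory Num.Theory.
Local Open Scope classical_set_scope.
Local Open Scope ring_scope.
Local Open Scope quotient_scope.

Section Defs.
Variable R : realType.

Definition is_order (T : Type) (le : T -> T -> Prop) :=
  [/\ forall x, le x x,
      forall x y, le x y -> le y x -> x = y &
      forall x y z, le x y -> le y z -> le x z].

Definition cont_iso01 (E : topologicalType) (le : E -> E -> Prop) (f : E -> R) :=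
  [/\ continuous f, forall x, 0 <= f x <= 1 & forall x y, le x y -> f x <= f y].

(* the topology of E is the initial topology of the family F:
   open sets are exactly unions of finite intersections of sets f^-1(U),
   f in F, U open in R *)
Definition subbasic_F (E : topologicalType) (le : E -> E -> Prop) (A : set E) :=
  exists f : E -> R, cont_iso01 le f /\ exists U : set R, open U /\ A = f @^-1` U.

Definition initial_topology_F (E : topologicalType) (le : E -> E -> Prop) :=
  forall A : set E, open A <->
    (forall x, A x -> exists2 B, finI_from (subbasic_F le) id B & B x /\ B `<=` A).

Definition completely_regularly_ordered (E : topologicalType) (le : E -> E -> Prop) :=
  [/\ is_order le, initial_topology_F le &
      forall x y, le x y <-> (forall f, cont_iso01 le f -> f x <= f y)].

Definition embedding (E K : topologicalType) (c : E -> K) :=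
  [/\ injective c, continuous c &
      forall U : set E, open U -> exists V : set K, open V /\ c @` U = V `&` range c].

Definition stone_cech (E bE : topologicalType) (b : E -> bE) :=
  [/\ compact [set: bE], hausdorff_space bE, embedding b, dense (range b) &
      forall f : E -> R, continuous f -> (exists M : R, forall x, `|f x| <= M) ->
        exists g : bE -> R, continuous g /\ forall x, g (b x) = f x].

Definition T2_order_compactification (E : topologicalType) (le : E -> E -> Prop)
    (K : topologicalType) (leK : K -> K -> Prop) (c : E -> K) :=
  [/\ compact [set: K], hausdorff_space K,
      is_order leK /\ closed [set p : K * K | leK p.1 p.2],
      embedding c /\ dense (range c) &
      forall x y, le x y <-> leK (c x) (c y)].

Definition compactification_le (E : topologicalType)
    (K1 : topologicalType) (le1 : K1 -> K1 -> Prop) (c1 : E -> K1)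
    (K2 : topologicalType) (le2 : K2 -> K2 -> Prop) (c2 : E -> K2) :=
  exists C : K2 -> K1, [/\ continuous C, forall x y, le2 x y -> le1 (C x) (C y) &
                          forall x, C (c2 x) = c1 x].

Definition compactification_equiv (E : topologicalType)
    (K1 : topologicalType) (le1 : K1 -> K1 -> Prop) (c1 : E -> K1)
    (K2 : topologicalType) (le2 : K2 -> K2 -> Prop) (c2 : E -> K2) :=
  compactification_le le1 c1 le2 c2 /\ compactification_le le2 c2 le1 c1.

Definition nachbin_compactification (E : topologicalType) (le : E -> E -> Prop)
    (nE : topologicalType) (len : nE -> nE -> Prop) (n : E -> nE) :=
  T2_order_compactification le len n /\
  forall f : E -> R, cont_iso01 le f ->
    exists g : nE -> R, [/\ continuous g, forall x, 0 <= g x <= 1,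
      forall x y, len x y -> g x <= g y & forall x, g (n x) = f x].

Definition le_beta (E : topologicalType) (le : E -> E -> Prop)
    (bE : topologicalType) (b : E -> bE) (x y : bE) :=
  forall f : E -> R, cont_iso01 le f ->
    forall g : bE -> R, continuous g -> (forall z, g (b z) = f z) -> g x <= g y.

Definition sim_beta (E : topologicalType) (le : E -> E -> Prop)
    (bE : topologicalType) (b : E -> bE) : rel bE :=
  fun x y => `[< le_beta le b x y /\ le_beta le b y x >].

Lemma sim_beta_refl (E : topologicalType) (le : E -> E -> Prop)
    (bE : topologicalType) (b : E -> bE) : reflexive (@sim_beta E le bE b).
Proof. by move=> x; apply/asboolP; split => f _ g _ _. Qed.

Lemma sim_beta_sym (E : topologicalType) (le : E -> E -> Prop)
    (bE : topologicalType) (b : E -> bE) : symmetric (@sim_beta E le bE b).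
Proof.
move=> x y; apply/asboolP/asboolP; by case.
Qed.

Lemma sim_beta_trans (E : topologicalType) (le : E -> E -> Prop)
    (bE : topologicalType) (b : E -> bE) : transitive (@sim_beta E le bE b).
Proof.
move=> y x z /asboolP[h1 h2] /asboolP[h3 h4]; apply/asboolP; split.
- move=> f hf g cg hg; apply: le_trans (h1 f hf g cg hg) (h3 f hf g cg hg).
- move=> f hf g cg hg; apply: le_trans (h4 f hf g cg hg) (h2 f hf g cg hg).
Qed.

Canonical sim_beta_equiv (E : topologicalType) (le : E -> E -> Prop)
    (bE : topologicalType) (b : E -> bE) : equiv_rel bE :=
  EquivRel (@sim_beta E le bE b) (@sim_beta_refl E le bE b)
           (@sim_beta_sym E le bE b) (@sim_beta_trans E le bE b).

Definition beta_quot (E : topologicalType) (le : E -> E -> Prop)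
    (bE : topologicalType) (b : E -> bE) : topologicalType :=
  quotient_topology {eq_quot (sim_beta_equiv le b)}.

Definition beta_proj (E : topologicalType) (le : E -> E -> Prop)
    (bE : topologicalType) (b : E -> bE) : bE -> beta_quot le b :=
  fun x => \pi_(beta_quot le b) x.

Definition le_quot (E : topologicalType) (le : E -> E -> Prop)
    (bE : topologicalType) (b : E -> bE) (p q : beta_quot le b) : Prop :=
  le_beta le b (repr p) (repr q).

End Defs.

From HB Require Import structures.
From mathcomp Require Import all_boot all_order all_algebra.
From mathcomp Require Import generic_quotient.
From mathcomp Require Import all_classical all_reals all_analysis.
From mathcomp Require Import zify finmap.
Import numFieldTopology.Exports numFieldNormedType.Exports.
Set Implicit Arguments. Unset Strict Implicit. Unset Printing Implicit Defensive.
Import Order.TTheory GRing.Theory Num.Theory.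
Local Open Scope classical_set_scope.
Local Open Scope ring_scope.

(* The extensions f~ to beta E of the functions f in F descend to continuous
   functions on Q = beta E / ~_beta which separate the points of Q and
   determine its order; hence Q is compact, Hausdorff and T2-ordered, and
   E embeds in it because the topology and the order of E are the initial
   ones for F.  A map between two compactifications c1, c2 of E is obtained
   by sending a point of c1 E to a cluster point of the image under c2 of
   its trace on E, and it is continuous once its composites with a family
   of continuous real functions separating the points of the target are.
   From nE to Q this family is {f~ | f in F}; from Q to nE it is the
   continuous isotone functions on nE, which separate points and determine
   the order of nE by Nachbin's order-preserving Urysohn lemma. *)

Lemma closed_upper_closure (K : topologicalType) (r : K -> K -> Prop) (A : set K) :
  compact [set: K] -> closed [set p : K * K | r p.1 p.2] -> closed A ->
  closed [set x | exists2 a, A a & r a x].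
Proof.
move=> cK cG cA x clx.
have cpA : compact A := subclosed_compact cA cK (@subsetT _ A).
(* a cluster point in A of the sets of points of A below a neighbourhood
   of x lies below x, the graph of r being closed *)
pose F := filter_from (nbhs x) (fun N => [set a | A a /\ exists2 y, N y & r a y]).
have FF : ProperFilter F.
  apply: filter_from_proper.
    apply: filter_from_filter; first by exists setT; exact: filterT.
    move=> N1 N2 h1 h2; exists (N1 `&` N2); first exact: filterI.
    by move=> a [Aa [y [N1y N2y] ray]]; split; split=> //; exists y.
  move=> N nN; have [y [[a Aa ray] Ny]] := clx N nN.
  by exists a; split=> //; exists y.
have FA : F A by exists setT; [exact: filterT | move=> a []].
have [a [Aa cla]] := cpA F FF FA.
exists a => //; apply: (cG (a, x)) => P [[Q1 Q2] /= [nQ1 nQ2] sQ].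
have Fs : F [set a' | A a' /\ exists2 y, Q2 y & r a' y] by exists Q2.
have [a' [[Aa' [y Q2y ray]] Q1a']] := cla _ _ Fs nQ1.
by exists (a', y); split => //; apply: sQ.
Qed.

Lemma closed_lower_closure (K : topologicalType) (r : K -> K -> Prop) (A : set K) :
  compact [set: K] -> closed [set p : K * K | r p.1 p.2] -> closed A ->
  closed [set x | exists2 a, A a & r x a].
Proof.
move=> cK cG; apply: (closed_upper_closure (r := fun x y => r y x) cK).
have -> : [set p : K * K | r p.2 p.1] =
    (fun p : K * K => (p.2, p.1)) @^-1` [set p | r p.1 p.2] by [].
by apply: preimage_closed => // p _; exact: swap_continuous.
Qed.

Section Dyadic.
Variable R : realType.

Definition dyadic n k : R := k%:R / (2 ^ n)%N%:R.

Lemma pow2_gt0 n : 0 < (2 ^ n)%N%:R :> R.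
Proof. by rewrite ltr0n expn_gt0. Qed.

Lemma dyadic_ge0 n k : 0 <= dyadic n k.
Proof. by rewrite divr_ge0 // ltW // pow2_gt0. Qed.

Lemma dyadic_le1 n k : (k <= 2 ^ n)%N -> dyadic n k <= 1.
Proof. by move=> h; rewrite ler_pdivrMr ?pow2_gt0 // mul1r ler_nat. Qed.

Lemma dyadic_lt m j n k : (dyadic m j < dyadic n k) = (j * 2 ^ n < k * 2 ^ m)%N.
Proof.
by rewrite ltr_pdivrMr ?pow2_gt0 // mulrAC ltr_pdivlMr ?pow2_gt0 // -!natrM ltr_nat.
Qed.

Lemma dyadic_liftS m n k :
  dyadic (m + n) (k * 2 ^ m).+1 = dyadic n k + ((2 ^ (m + n))%N%:R)^-1.
Proof.
rewrite /dyadic -addn1 natrD natrM expnD natrM mulrDl div1r; congr (_ + _).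
by rewrite [X in _ / X]mulrC invfM mulrA mulrAC mulfK.
Qed.

Lemma inv_pow2_lt (e : R) : 0 < e -> exists m, ((2 ^ m)%N%:R)^-1 < e.
Proof.
move=> e0; exists (Num.bound e^-1).
have := @upper_nthrootP R e^-1 (Num.bound e^-1) (leqnn _).
rewrite -natrX => h.
by rewrite -[X in _ < X]invrK ltf_pV2 ?posrE ?invr_gt0 ?pow2_gt0.
Qed.

Lemma dyadic_dense (t u : R) : 0 <= t -> t < u -> u <= 1 ->
  exists n k, [/\ (k < 2 ^ n)%N, t < dyadic n k & dyadic n k < u].
Proof.
move=> t0 tu u1.
have [m hm] : exists m, ((2 ^ m)%N%:R)^-1 < u - t by apply: inv_pow2_lt; rewrite subr_gt0.
set k := (Num.truncn (t * (2 ^ m)%N%:R)).+1.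
have [h1 h2] := andP (truncn_itv (mulr_ge0 t0 (ltW (pow2_gt0 m)))).
have tk : t < dyadic m k by rewrite ltr_pdivlMr ?pow2_gt0.
have ku : dyadic m k < u.
  rewrite /dyadic /k -addn1 natrD mulrDl.
  have : (Num.truncn (t * (2 ^ m)%N%:R))%:R / (2 ^ m)%N%:R <= t.
    by rewrite ler_pdivrMr ?pow2_gt0.
  move: hm; rewrite mul1r ltrBrDl => hm hh.
  by apply: le_lt_trans hm; rewrite lerD2r.
exists m, k; split => //.
have : dyadic m k < 1 by exact: lt_le_trans ku u1.
by rewrite ltr_pdivrMr ?pow2_gt0 // mul1r ltr_nat.
Qed.

End Dyadic.

Section OrderUrysohn.
Variables (R : realType) (K : topologicalType) (r : K -> K -> Prop).
Hypotheses (cK : compact [set: K]) (hK : hausdorff_space K)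
  (rr : forall x, r x x) (rt : forall x y z, r x y -> r y z -> r x z)
  (cG : closed [set p : K * K | r p.1 p.2]).

Definition down_closed (A : set K) := forall x y, r x y -> A y -> A x.
Definition open_lower (A : set K) := open A /\ down_closed A.
Definition closed_lower (A : set K) := closed A /\ down_closed A.

Lemma closed_lowerT : closed_lower setT. Proof. by split; [exact: closedT |]. Qed.

Definition interpolates (C U : set K) (p : set K * set K) :=
  [/\ open_lower p.1, closed_lower p.2, C `<=` p.1, p.1 `<=` p.2 & p.2 `<=` U].

Lemma exists_interpolant C U : closed_lower C -> open_lower U -> C `<=` U ->
  exists p, interpolates C U p.
Proof.
move=> [cC dC] [oU dU] CU.
have sU : set_nbhs C U by rewrite set_nbhsP; exists U; split.
have [N sN clNU] := compact_normal hK cK cC sU.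
have [N' [oN' CN' N'N]] := (set_nbhsP C N).1 sN.
(* shrink the open set N' to its largest lower subset V, and take for the
   closed set the lower closure of the closure of V *)
pose V := [set x | forall y, r y x -> N' y].
exists (V, [set x | exists2 a, closure V a & r x a]); split => /=.
- split; last by move=> x y rxy Vy z rzx; apply: Vy; exact: rt rzx rxy.
  have -> : V = ~` [set x | exists2 a, (~` N') a & r a x].
    apply/seteqP; split => x /=.
      by move=> Vx [a Na rax]; apply: Na; apply: Vx.
    by move=> h y ryx; apply: contrapT => Ny; apply: h; exists y.
  by apply/closed_openC/closed_upper_closure => //; exact: open_closedC.
- split; first exact/closed_lower_closure/closed_closure.
  by move=> x y rxy [a Va rya]; exists a => //; exact: rt rxy rya.
- by move=> x Cx y ryx; apply: CN'; exact: dC ryx Cx.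
- by move=> x Vx; exists x => //; exact: subset_closure.
- move=> x [a Va rxa]; apply: (dU x a rxa); apply: clNU.
  by apply: (closureS N'N); apply: (closureS _ Va) => y; apply.
Qed.

Definition interpolant C U := xget (setT, setT) (interpolates C U).

Lemma interpolantP C U : closed_lower C -> open_lower U -> C `<=` U ->
  interpolates C U (interpolant C U).
Proof. by move=> gC gU CU; exact: xgetPex (exists_interpolant gC gU CU). Qed.

Section Construction.
Variables (C0 U1 : set K).
Hypotheses (gC0 : closed_lower C0) (gU1 : open_lower U1) (C0U1 : C0 `<=` U1).

(* [dyadic_sets n k] is the pair (O, C) attached to the dyadic k / 2 ^ n in
   Urysohn's construction; level n + 1 keeps the pairs of level n at even
   indices and interpolates between consecutive ones at odd indices. *)
Fixpoint dyadic_sets (n : nat) : nat -> set K * set K :=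
  match n with
  | 0 => fun k => if k == 0%N then interpolant C0 U1 else (U1, setT)
  | m.+1 => fun j => if odd j
      then interpolant (dyadic_sets m j./2).2 (dyadic_sets m (j./2).+1).1
      else dyadic_sets m j./2
  end.

Local Notation O n k := (dyadic_sets n k).1.
Local Notation C n k := (dyadic_sets n k).2.

Lemma half_ltn_pow2 n i : (i < 2 ^ n.+1)%N -> (i./2 < 2 ^ n)%N.
Proof. by rewrite expnS -{1}(odd_double_half i) -mul2n; lia. Qed.

Lemma half_leq_pow2 n i : (i <= 2 ^ n.+1)%N -> (i./2 <= 2 ^ n)%N.
Proof. by rewrite expnS -{1}(odd_double_half i) -mul2n; lia. Qed.

Lemma odd_ltn_pow2 n i : odd i -> (i <= 2 ^ n.+1)%N -> (i < 2 ^ n.+1)%N.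
Proof. by move=> oi; rewrite leq_eqVlt => /orP[/eqP ei|//]; rewrite ei oddX in oi. Qed.

Lemma dyadic_sets_chain n :
  (forall i, (i <= 2 ^ n)%N -> [/\ open_lower (O n i), closed_lower (C n i) & O n i `<=` C n i])
  /\ (forall i, (i < 2 ^ n)%N -> C n i `<=` O n i.+1).
Proof.
elim: n => [|n [IH1 IH2]].
  have [? ? ? ? ?] := interpolantP gC0 gU1 C0U1.
  by split; [case=> [|[|//]] _ /=; split; rewrite ?closed_lowerT | case].
have mid k : (k < 2 ^ n)%N -> interpolates (C n k) (O n k.+1)
    (interpolant (C n k) (O n k.+1)).
  move=> kn; have [_ a2 _] := IH1 _ (ltnW kn); have [b1 _ _] := IH1 _ kn.
  exact: interpolantP a2 b1 (IH2 _ kn).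
split=> i hi /=; case: ifP => oi.
- by have [? ? _ ? _] := mid _ (half_ltn_pow2 (odd_ltn_pow2 oi hi)).
- exact/IH1/half_leq_pow2.
- rewrite uphalf_half oi add1n.
  by have [_ _ _ _ ?] := mid _ (half_ltn_pow2 hi).
- rewrite uphalf_half oi add0n.
  by have [_ _ ? _ _] := mid _ (half_ltn_pow2 hi).
Qed.

Lemma dyadic_sets_lift d n k : dyadic_sets (d + n) (k * 2 ^ d) = dyadic_sets n k.
Proof.
elim: d k => [|d IH] k; first by rewrite muln1.
have e : (k * 2 ^ d.+1 = (k * 2 ^ d).*2)%N by rewrite expnS -mul2n; lia.
by rewrite addSn e /= odd_double doubleK.
Qed.

Lemma dyadic_sets_sub_same n i j : (i < j <= 2 ^ n)%N -> C n i `<=` O n j.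
Proof.
have [I1 I2] := dyadic_sets_chain n.
elim: j => [|j IH] /andP[ij jn]; first by [].
rewrite ltnS leq_eqVlt in ij; case/orP: ij => [/eqP ->|ij]; first exact: I2.
have [_ _ OC] := I1 _ (ltnW jn).
by move=> x /IH; rewrite ij ltnW // => /(_ isT) /OC /(I2 _ jn).
Qed.

Lemma dyadic_sets_sub m j n k : (j <= 2 ^ m)%N -> (k <= 2 ^ n)%N ->
  dyadic R m j < dyadic R n k -> C m j `<=` O n k.
Proof.
rewrite dyadic_lt => jm kn h.
rewrite -(dyadic_sets_lift n m j) -(dyadic_sets_lift m n k) (addnC m n).
by apply: dyadic_sets_sub_same; rewrite h /= expnD leq_pmul2r ?expn_gt0.
Qed.

Lemma dyadic_sets_good n k : (k <= 2 ^ n)%N ->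
  [/\ open_lower (O n k), closed_lower (C n k) & O n k `<=` C n k].
Proof. exact: (dyadic_sets_chain n).1. Qed.

(* 1 is added to the levels so that the infimum is at most 1 *)
Definition urysohn_levels x := [set t : R | t = 1 \/
  exists n k, [/\ (k <= 2 ^ n)%N, O n k x & t = dyadic R n k]].

Definition urysohn_fun x := inf (urysohn_levels x).

Lemma urysohn_levels_lb x : lbound (urysohn_levels x) 0.
Proof. by move=> t [->|[n [k [_ _ ->]]]]; [exact: ler01 | exact: dyadic_ge0]. Qed.

Lemma urysohn_levels_has_lb x : has_lbound (urysohn_levels x).
Proof. by exists 0; exact: urysohn_levels_lb. Qed.

Lemma urysohn_levels_neq0 x : urysohn_levels x !=set0.
Proof. by exists 1; left. Qed.

Lemma urysohn_fun_ge0 x : 0 <= urysohn_fun x.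
Proof. exact: lb_le_inf (urysohn_levels_neq0 _) (@urysohn_levels_lb x). Qed.

Lemma urysohn_fun_le1 x : urysohn_fun x <= 1.
Proof. exact: ge_inf (urysohn_levels_has_lb x) _ (or_introl erefl). Qed.

Lemma urysohn_fun_le_open n k x : (k <= 2 ^ n)%N -> O n k x -> urysohn_fun x <= dyadic R n k.
Proof. by move=> kn Ox; apply: (ge_inf (urysohn_levels_has_lb x)); right; exists n, k. Qed.

Lemma urysohn_fun_ge_open n k x : (k <= 2 ^ n)%N -> ~ O n k x -> dyadic R n k <= urysohn_fun x.
Proof.
move=> kn nx; apply: lb_le_inf (urysohn_levels_neq0 _) _ => t [->|[m [j [jm xj ->]]]].
  exact: dyadic_le1.
rewrite leNgt; apply/negP => h; apply: nx.
by apply: (dyadic_sets_sub jm kn h); have [_ _] := dyadic_sets_good jm; apply.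
Qed.

Lemma urysohn_fun_le_closed n k x : (k < 2 ^ n)%N -> C n k x -> urysohn_fun x <= dyadic R n k.
Proof.
move=> kn xk; apply/ler_addgt0Pr => e e0.
have [m hm] := inv_pow2_lt e0.
(* x lies in O at the dyadic just above k / 2 ^ n at level m + n *)
have hJ : (k * 2 ^ m < (k * 2 ^ m).+1 <= 2 ^ (m + n))%N.
  rewrite ltnSn /= expnD; move: (expn_gt0 2 m) kn.
  by generalize (2 ^ m)%N (2 ^ n)%N => a b; nia.
have xJ : O (m + n) (k * 2 ^ m).+1 x.
  by apply: (dyadic_sets_sub_same hJ); rewrite dyadic_sets_lift.
apply: le_trans (urysohn_fun_le_open _ xJ) _; first by case/andP: hJ.
rewrite dyadic_liftS lerD2l; apply: le_trans (ltW hm).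
by rewrite lef_pV2 ?posrE ?pow2_gt0 // ler_nat leq_exp2l //; lia.
Qed.

Lemma urysohn_fun_iso x y : r x y -> urysohn_fun x <= urysohn_fun y.
Proof.
move=> rxy; apply: lb_le_inf (urysohn_levels_neq0 _) _ => t [->|[n [k [kn yk ->]]]].
  exact: urysohn_fun_le1.
have [[_ dO] _ _] := dyadic_sets_good kn.
exact: urysohn_fun_le_open kn (dO _ _ rxy yk).
Qed.

Lemma open_urysohn_fun_lt t : open [set x | urysohn_fun x < t].
Proof.
have [t1|t1] := ltrP 1 t.
  rewrite (_ : [set x | _] = setT); first exact: openT.
  by apply/seteqP; split => // x _; exact: le_lt_trans (urysohn_fun_le1 x) t1.
have -> : [set x | urysohn_fun x < t] = \bigcup_(p in [set p : nat * nat |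
    (p.2 <= 2 ^ p.1)%N /\ dyadic R p.1 p.2 < t]) O p.1 p.2.
  apply/seteqP; split => x /=.
    move=> h; have [s [->|[n [k [kn xk ->]]]] st] := inf_lt (urysohn_levels_neq0 _) h.
      by move: st; rewrite ltNge t1.
    by exists (n, k).
  by move=> [[n k] /= [kn dt] xk]; exact: le_lt_trans (urysohn_fun_le_open kn xk) dt.
apply: bigcup_open => -[n k] /= [kn _].
by have [[oO _] _ _] := dyadic_sets_good kn.
Qed.

Lemma open_urysohn_fun_gt t : open [set x | t < urysohn_fun x].
Proof.
have [t0|t0] := ltrP t 0.
  rewrite (_ : [set x | _] = setT); first exact: openT.
  by apply/seteqP; split => // x _; exact: lt_le_trans t0 (urysohn_fun_ge0 x).
have -> : [set x | t < urysohn_fun x] = \bigcup_(p in [set p : nat * nat |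
    (p.2 <= 2 ^ p.1)%N /\ t < dyadic R p.1 p.2]) ~` C p.1 p.2.
  apply/seteqP; split => x /=.
    move=> h; have [n [k [kn tk ku]]] := dyadic_dense t0 h (urysohn_fun_le1 x).
    exists (n, k) => /=; first by split => //; exact: ltnW.
    by move=> xK; have := urysohn_fun_le_closed kn xK; rewrite leNgt ku.
  move=> [[n k] /= [kn tk] nK]; apply: lt_le_trans tk (urysohn_fun_ge_open kn _).
  by have [_ _ OC] := dyadic_sets_good kn; move/OC.
apply: bigcup_open => -[n k] /= [kn _]; apply: closed_openC.
by have [_ [cC _] _] := dyadic_sets_good kn.
Qed.

Lemma urysohn_fun_continuous : continuous urysohn_fun.
Proof.
move=> x; apply/cvgrPdist_lt => e e0.
have hx : open_nbhs x ([set y | urysohn_fun x - e < urysohn_fun y] `&`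
                       [set y | urysohn_fun y < urysohn_fun x + e]).
  split; first exact: openI (open_urysohn_fun_gt _) (open_urysohn_fun_lt _).
  by split => /=; rewrite ?ltrBlDr ltrDl.
by apply: filterS (open_nbhs_nbhs hx) => y [h1 h2]; rewrite ltr_distlC h1 h2.
Qed.

Lemma urysohn_fun_on_C0 x : C0 x -> urysohn_fun x = 0.
Proof.
move=> Cx; apply/le_anti; rewrite urysohn_fun_ge0 andbT.
have [_ _ C0O _ _] := interpolantP gC0 gU1 C0U1.
by have := urysohn_fun_le_open (isT : (0 <= 2 ^ 0)%N) (C0O _ Cx); rewrite /dyadic mul0r.
Qed.

Lemma urysohn_fun_off_U1 x : ~ U1 x -> urysohn_fun x = 1.
Proof.
move=> Ux; apply/le_anti; rewrite urysohn_fun_le1 /=.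
by have := @urysohn_fun_ge_open 0 1 x isT Ux; rewrite /dyadic expn0 divr1.
Qed.

End Construction.

Lemma order_urysohn_lower C U : closed_lower C -> open_lower U -> C `<=` U ->
  exists h : K -> R, [/\ cont_iso01 r h, forall x, C x -> h x = 0 & forall x, ~ U x -> h x = 1].
Proof.
move=> gC gU CU; exists (urysohn_fun C U); split.
- split; [exact: urysohn_fun_continuous | | exact: urysohn_fun_iso].
  by move=> x; rewrite urysohn_fun_ge0 urysohn_fun_le1.
- exact: urysohn_fun_on_C0.
- exact: urysohn_fun_off_U1.
Qed.

Lemma order_urysohn a b : ~ r a b -> exists h : K -> R, cont_iso01 r h /\ h b < h a.
Proof.
move=> nab.
have closed1 (c : K) : closed [set c] := @accessible_closed_set1 K (hausdorff_accessible hK) c.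
have gC : closed_lower [set x | r x b].
  split; last by move=> x y rxy ryb; exact: rt rxy ryb.
  rewrite (_ : [set x | r x b] = [set x | exists2 a', [set b] a' & r x a']).
    exact: closed_lower_closure.
  by apply/seteqP; split => x /=; [exists b | case=> a' ->].
have gU : open_lower (~` [set x | r a x]).
  split; last by move=> x y rxy nay rax; apply: nay; exact: rt rax rxy.
  apply: closed_openC.
  rewrite (_ : [set x | r a x] = [set x | exists2 a', [set a] a' & r a' x]).
    exact: closed_upper_closure.
  by apply/seteqP; split => x /=; [exists a | case=> a' ->].
have CU : [set x | r x b] `<=` ~` [set x | r a x].
  by move=> x rxb rax; apply: nab; exact: rt rax rxb.
have [h [F_comp_n h0 h1]] := order_urysohn_lower gC gU CU.
by exists h; split => //; rewrite h0 // h1 ?ltr01 // => /(_ (rr a)).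
Qed.

Lemma cont_iso01_separate a b : (forall x y, r x y -> r y x -> x = y) -> a <> b ->
  exists h : K -> R, cont_iso01 r h /\ h a <> h b.
Proof.
move=> anti ab.
have [nab|nba] : ~ r a b \/ ~ r b a.
  by apply: contrapT => /not_orP[/contrapT ? /contrapT ?]; exact/ab/anti.
- have [h [Hh lt]] := order_urysohn nab.
  by exists h; split => // e; move: lt; rewrite e ltxx.
- have [h [Hh lt]] := order_urysohn nba.
  by exists h; split => // e; move: lt; rewrite e ltxx.
Qed.

End OrderUrysohn.

Section RealFunctions.
Variable R : realType.

Lemma separate_reals (a c : R) : a <> c -> exists U V : set R,
  [/\ open U, open V, U a, V c & forall z, U z -> V z -> False].
Proof.
move=> /eqP ac; have := @Rhausdorff R; rewrite open_hausdorff => /(_ a c ac).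
move=> [[U V]] /= [/set_mem aU /set_mem cV] [oU oV /eqP UV].
by exists U, V; split => // z Uz Vz; have : (U `&` V) z by []; rewrite UV.
Qed.

Lemma preimage_open_nbhs (T U : topologicalType) (g : T -> U) x V :
  continuous g -> open V -> V (g x) -> nbhs x (g @^-1` V).
Proof.
by move=> cg oV Vx; apply: open_nbhs_nbhs; split => //; exact: (continuousP g).1 cg _ oV.
Qed.

Lemma dense_continuous_eq (T : topologicalType) (S : set T) (g1 g2 : T -> R) :
  dense S -> continuous g1 -> continuous g2 ->
  (forall x, S x -> g1 x = g2 x) -> g1 =1 g2.
Proof.
move=> dS c1 c2 h x; apply: contrapT => /separate_reals[U [V [oU oV Ux Vx UV]]].
have oUV : open (g1 @^-1` U `&` g2 @^-1` V).
  by apply: openI; [exact: (continuousP g1).1 c1 _ oU | exact: (continuousP g2).1 c2 _ oV].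
have [z [[Uz Vz] Sz]] := dS _ (ex_intro _ x (conj Ux Vx)) oUV.
by apply: (UV (g1 z)) => //; rewrite h.
Qed.

Lemma hausdorff_separating (T : topologicalType) (I : Type) (P : I -> Prop)
    (phi : I -> T -> R) :
  (forall i, P i -> continuous (phi i)) ->
  (forall x y, x <> y -> exists i, P i /\ phi i x <> phi i y) ->
  hausdorff_space T.
Proof.
move=> cphi sep; rewrite open_hausdorff => x y /eqP /sep[i [Pi]].
move=> /separate_reals[U [V [oU oV Ux Vx UV]]].
exists (phi i @^-1` U, phi i @^-1` V) => /=; first by split; apply: mem_set.
split; [exact: (continuousP _).1 (cphi _ Pi) _ oU | exact: (continuousP _).1 (cphi _ Pi) _ oV |].
by apply/eqP/seteqP; split => // z [] /UV h /h.
Qed.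

(* A point of X is sent to a cluster point in Y of the image of its trace
   filter on E; it is then compatible with every pair of continuous
   functions on X and Y that agree on E. *)
Lemma exists_compatible_point (E X Y : topologicalType) (c1 : E -> X) (c2 : E -> Y) :
  dense (range c1) -> compact [set: Y] -> forall x, exists y,
  forall (g : X -> R) (h : Y -> R), continuous g -> continuous h ->
    (forall e, g (c1 e) = h (c2 e)) -> h y = g x.
Proof.
move=> dc cY x.
pose G := [set S : set Y | exists2 W, nbhs x W & forall e, W (c1 e) -> S (c2 e)].
have FG : ProperFilter G.
  split.
    move=> [W]; rewrite nbhsE => -[Ob [oO Ox] OW] hW.
    have [z [Oz [e _ ez]]] := dc Ob (ex_intro _ x Ox) oO.
    by apply: (hW e); apply: OW; rewrite ez.
  split.
  - by exists setT => //; exact: filterT.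
  - move=> A B [W1 n1 h1] [W2 n2 h2]; exists (W1 `&` W2); first exact: filterI.
    by move=> e [w1 w2]; split; [exact: h1 | exact: h2].
  - by move=> A B AB [W nW hW]; exists W => // e /hW; exact: AB.
have [y [_ cly]] := cY G FG (ex_intro2 _ _ setT filterT (fun _ _ => I)).
exists y => g h cg ch gh; apply: contrapT => /separate_reals[U [V [oU oV Uy Vx UV]]].
have GV : G (h @^-1` V).
  by exists (g @^-1` V); [exact: preimage_open_nbhs | move=> e /=; rewrite gh].
have [z [Vz Uz]] := cly _ _ GV (preimage_open_nbhs ch oU Uy).
exact: UV Uz Vz.
Qed.

Lemma continuous_separating (X Y : topologicalType) (D : X -> Y) (I : Type)
    (P : I -> Prop) (phi : I -> Y -> R) :
  compact [set: Y] -> hausdorff_space Y ->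
  (forall i, P i -> continuous (phi i)) ->
  (forall y y', y <> y' -> exists i, P i /\ phi i y <> phi i y') ->
  (forall i, P i -> continuous (phi i \o D)) -> continuous D.
Proof.
move=> cY hY cphi sep cphiD x.
apply: (@compact_cluster_set1 Y (D x) (D @ x) setT hY cY); [exact: filterT..|].
apply/seteqP; split => y /=; last first.
  by move=> -> A B /nbhs_singleton DA /nbhs_singleton DB; exists (D x).
move=> cly; apply: contrapT => /sep[i [Pi]] /separate_reals[U [V [oU oV Uy Vx UV]]].
have DV : (D @ x) (phi i @^-1` V) by exact: preimage_open_nbhs (cphiD _ Pi) oV Vx.
have [z [Vz Uz]] := cly _ _ DV (preimage_open_nbhs (cphi _ Pi) oU Uy).
exact: UV Uz Vz.
Qed.

End RealFunctions.

Lemma open_fset_bigcap (T : topologicalType) (I : choiceType) (D : {fset I})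
    (F : I -> set T) :
  (forall i, i \in D -> open (F i)) -> open (\bigcap_(i in [set` D]) F i).
Proof.
move=> oF; rewrite openE => x hx; apply: filter_bigI => i iD.
by have := oF i iD; rewrite openE => /(_ x (hx i iD)).
Qed.

Lemma cont_iso01_comp (R : realType) (E K : topologicalType) (le : E -> E -> Prop)
    (leK : K -> K -> Prop) (c : E -> K) (h : K -> R) :
  continuous c -> (forall x y, le x y -> leK (c x) (c y)) ->
  cont_iso01 leK h -> cont_iso01 le (h \o c).
Proof.
move=> cc ic [ch h01 hiso]; split.
- by move=> x; apply: continuous_comp; [exact: cc | exact: ch].
- by move=> x; exact: h01.
- by move=> x y /ic; exact: hiso.
Qed.

Local Open Scope quotient_scope.

Lemma beta_proj_eqP (R : realType) (E : topologicalType) (le : E -> E -> Prop)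
    (bE : topologicalType) (b : E -> bE) p q :
  beta_proj R le b p = beta_proj R le b q <-> sim_beta R le b p q.
Proof. exact: (rwP (@eqquotP _ _ {eq_quot (sim_beta_equiv R le b)} p q)). Qed.

Section BetaQuotient.
Variables (R : realType) (E : topologicalType) (le : E -> E -> Prop)
  (bE : topologicalType) (b : E -> bE)
  (nE : topologicalType) (len : nE -> nE -> Prop) (n : E -> nE).
Hypotheses (hcro : completely_regularly_ordered R le) (hsc : stone_cech R b)
  (hna : nachbin_compactification R le len n).

Local Notation F := (@cont_iso01 R E le).
Local Notation Q := (beta_quot R le b).
Local Notation pi := (beta_proj R le b).

Lemma stone_cech_dense : dense (range b). Proof. by case: hsc. Qed.
Lemma stone_cech_compact : compact [set: bE]. Proof. by case: hsc. Qed.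

Definition beta_ext (f : E -> R) : bE -> R :=
  xget (fun=> 0) [set g | continuous g /\ forall x, g (b x) = f x].

Lemma beta_extP f : F f -> continuous (beta_ext f) /\ forall x, beta_ext f (b x) = f x.
Proof.
move=> [cf f01 _].
apply: (@xgetPex _ (fun=> 0) [set g : bE -> R | continuous g /\ forall x, g (b x) = f x]).
have [_ _ _ _ ext] := hsc; have [|g hg] := ext f cf; last by exists g.
by exists 1 => x; have /andP[f0 f1] := f01 x; rewrite ger0_norm.
Qed.

Lemma beta_ext_unique f g : F f -> continuous g -> (forall x, g (b x) = f x) ->
  g =1 beta_ext f.
Proof.
move=> Ff cg hg; have [ce he] := beta_extP Ff.
by apply: dense_continuous_eq stone_cech_dense cg ce _ => _ [x _ <-]; rewrite hg he.
Qed.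

Lemma le_betaP p q : le_beta R le b p q <-> forall f, F f -> beta_ext f p <= beta_ext f q.
Proof.
split; first by move=> h f Ff; have [ce he] := beta_extP Ff; exact: h f Ff _ ce he.
by move=> h f Ff g cg hg; rewrite !(beta_ext_unique Ff cg hg); exact: h.
Qed.

Lemma sim_betaP p q : sim_beta R le b p q <-> forall f, F f -> beta_ext f p = beta_ext f q.
Proof.
split; last by move=> h; apply/asboolP; split; apply/le_betaP => f Ff; rewrite h.
move/asboolP => [/le_betaP h1 /le_betaP h2] f Ff.
by apply/le_anti; rewrite h1 ?h2.
Qed.

Definition quot_ext f (P : Q) := beta_ext f (repr P).

Lemma beta_projK (P : Q) : pi (repr P) = P.
Proof. exact: reprK. Qed.

Lemma quot_ext_proj f p : F f -> quot_ext f (pi p) = beta_ext f p.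
Proof. by move=> Ff; apply: (sim_betaP _ _).1 Ff; apply/beta_proj_eqP; rewrite beta_projK. Qed.

Lemma quot_ext_continuous f : F f -> continuous (quot_ext f).
Proof.
move=> Ff; have [ce _] := beta_extP Ff.
apply: (@repr_comp_continuous bE {eq_quot (sim_beta_equiv R le b)} R _ ce).
by move=> p q /eqP /beta_proj_eqP /sim_betaP /(_ f Ff) ->.
Qed.

Lemma quot_ext_inj (P P' : Q) : (forall f, F f -> quot_ext f P = quot_ext f P') -> P = P'.
Proof. by move=> h; rewrite -(beta_projK P) -(beta_projK P'); apply/beta_proj_eqP/sim_betaP. Qed.

Lemma le_quotP (P P' : Q) : le_quot P P' <-> forall f, F f -> quot_ext f P <= quot_ext f P'.
Proof. exact: le_betaP. Qed.

Lemma quot_ext_separate (P P' : Q) : P <> P' -> exists f, F f /\ quot_ext f P <> quot_ext f P'.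
Proof.
move=> neq; apply: contrapT => h; apply/neq/quot_ext_inj => f Ff.
by apply: contrapT => hne; apply: h; exists f.
Qed.

Lemma beta_quot_compact : compact [set: Q].
Proof.
have -> : [set: Q] = pi @` [set: bE].
  by apply/seteqP; split => // P _; exists (repr P) => //; rewrite beta_projK.
apply: continuous_compact stone_cech_compact.
by apply: continuous_subspaceT => x; exact: pi_continuous.
Qed.

Lemma beta_quot_hausdorff : hausdorff_space Q.
Proof. exact: hausdorff_separating quot_ext_continuous quot_ext_separate. Qed.

Lemma le_quot_order : is_order (@le_quot R E le bE b).
Proof.
split.
- by move=> P; apply/le_quotP.
- move=> P P' /le_quotP h1 /le_quotP h2; apply: quot_ext_inj => f Ff.
  by apply/le_anti; rewrite h1 ?h2.
- move=> P P' P'' /le_quotP h1 /le_quotP h2; apply/le_quotP => f Ff.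
  exact: le_trans (h1 f Ff) (h2 f Ff).
Qed.

Lemma le_quot_closed : closed [set p : Q * Q | le_quot p.1 p.2].
Proof.
have -> : [set p : Q * Q | le_quot p.1 p.2] =
    \bigcap_(f in F) (fun p : Q * Q => quot_ext f p.2 - quot_ext f p.1) @^-1` [set x | 0 <= x].
  apply/seteqP; split => p /=.
    by move/le_quotP => h f Ff; rewrite /= subr_ge0; exact: h.
  by move=> h; apply/le_quotP => f Ff; have := h f Ff; rewrite /= subr_ge0.
apply: closed_bigI => f Ff; apply: preimage_closed; last exact: closed_ge.
move=> p _; apply: cvgB.
- apply: (@continuous_comp _ _ _ snd (quot_ext f)); first exact: cvg_snd.
  exact: quot_ext_continuous.
- apply: (@continuous_comp _ _ _ fst (quot_ext f)); first exact: cvg_fst.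
  exact: quot_ext_continuous.
Qed.

Lemma beta_proj_dense : dense (range (pi \o b)).
Proof.
move=> O [P OP] oO.
have oO' : open (pi @^-1` O) by exact: (continuousP _).1 pi_continuous _ oO.
have OreprP : (pi @^-1` O) (repr P) by rewrite /= beta_projK.
have [z [Oz [x _ xz]]] := stone_cech_dense (ex_intro _ (repr P) OreprP) oO'.
by exists (pi z); split => //; exists x => //=; rewrite xz.
Qed.

Lemma le_quot_proj x y : le x y <-> le_quot (pi (b x)) (pi (b y)).
Proof.
case: hcro => _ _ ->; rewrite le_quotP.
by split => h f Ff; have := h f Ff; rewrite !quot_ext_proj // (beta_extP Ff).2 (beta_extP Ff).2.
Qed.

Definition subbasic_lift (A : set E) : set Q :=
  \bigcup_(fW in [set fW : (E -> R) * set R | [/\ F fW.1, open fW.2 & A = fW.1 @^-1` fW.2]])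
    quot_ext fW.1 @^-1` fW.2.

Lemma subbasic_lift_open A : open (subbasic_lift A).
Proof.
apply: bigcup_open => -[f W] [/= Ff oW _].
exact: (continuousP _).1 (quot_ext_continuous Ff) _ oW.
Qed.

Lemma subbasic_liftE A x : subbasic_F R le A -> subbasic_lift A (pi (b x)) <-> A x.
Proof.
move=> [f [Ff [W [oW AW]]]]; split.
  by move=> [[g V] [/= Fg _ ->]] /=; rewrite quot_ext_proj // (beta_extP Fg).2.
rewrite AW => Wfx; exists (f, W) => //=.
by rewrite quot_ext_proj // (beta_extP Ff).2.
Qed.

Lemma beta_proj_embedding : embedding (pi \o b).
Proof.
have [_ _ [_ cb _] _ _] := hsc; have [[_ anti _] hinit hle] := hcro.
split.
- move=> x y /beta_proj_eqP /sim_betaP h; apply: anti; apply/hle => f Ff;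
    by rewrite -!(beta_extP Ff).2 (h f Ff).
- by move=> x; apply: continuous_comp; [exact: cb | exact: pi_continuous].
move=> U /hinit hU.
pose basic (D : {fset (set E)}) :=
  {subset D <= (subbasic_F R le : set (set E))} /\ \bigcap_(i in [set` D]) i `<=` U.
exists (\bigcup_(D in basic) \bigcap_(i in [set` D]) subbasic_lift i); split.
  by apply: bigcup_open => D _; apply: open_fset_bigcap => i _; exact: subbasic_lift_open.
apply/seteqP; split.
  move=> _ [x Ux <-]; split; last by exists x.
  have [_ [D sub <-] [Bx BU]] := hU x Ux.
  exists D => // i iD; apply/(subbasic_liftE _ (set_mem (sub i iD))); exact: Bx.
move=> P [[D [sub DU] hD] [x _ xP]]; exists x => //; apply: DU => i iD.
by apply/(subbasic_liftE _ (set_mem (sub i iD))); have := hD i iD; by rewrite -xP.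
Qed.

Lemma beta_quot_compactification :
  T2_order_compactification le (@le_quot R E le bE b) (pi \o b).
Proof.
split.
- exact: beta_quot_compact.
- exact: beta_quot_hausdorff.
- by split; [exact: le_quot_order | exact: le_quot_closed].
- by split; [exact: beta_proj_embedding | exact: beta_proj_dense].
- exact: le_quot_proj.
Qed.

Definition nachbin_ext (f : E -> R) : nE -> R :=
  xget (fun=> 0) [set g : nE -> R | cont_iso01 len g /\ forall x, g (n x) = f x].

Lemma nachbin_extP f :
  F f -> cont_iso01 len (nachbin_ext f) /\ forall x, nachbin_ext f (n x) = f x.
Proof.
move=> Ff; apply: (@xgetPex _ (fun=> 0) [set g : nE -> R | cont_iso01 len g /\ _]).
by have [_ /(_ f Ff) [g [cg g01 giso gn]]] := hna; exists g.
Qed.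

Lemma nachbin_to_beta_quot : compactification_le (@le_quot R E le bE b) (pi \o b) len n.
Proof.
have [[_ _ _ [_ dn] _] _] := hna.
have [p hp] := choice (@exists_compatible_point R _ _ _ n b dn stone_cech_compact).
have quot_ext_p f q : F f -> quot_ext f (pi (p q)) = nachbin_ext f q.
  move=> Ff; have [[cN _ _] eN] := nachbin_extP Ff; have [ce eb] := beta_extP Ff.
  by rewrite quot_ext_proj //; apply: hp => // e; rewrite eN eb.
exists (pi \o p); split.
- apply: continuous_separating beta_quot_compact beta_quot_hausdorff
    quot_ext_continuous quot_ext_separate _ => f Ff.
  have -> : quot_ext f \o (pi \o p) = nachbin_ext f by apply: funext => q; exact: quot_ext_p.
  by have [[]] := nachbin_extP Ff.
- move=> q q' lq; apply/le_quotP => f Ff; rewrite !quot_ext_p //.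
  by have [[_ _ iso] _] := nachbin_extP Ff; exact: iso.
- move=> x; apply: quot_ext_inj => f Ff; rewrite quot_ext_p // quot_ext_proj //.
  by rewrite (nachbin_extP Ff).2 (beta_extP Ff).2.
Qed.

Lemma beta_quot_to_nachbin : compactification_le len n (@le_quot R E le bE b) (pi \o b).
Proof.
have [[cnE hnE [[rr anti rt] cl] [[_ cn _] _] iffn] _] := hna.
have [p hp] := choice (@exists_compatible_point R _ _ _ b n stone_cech_dense cnE).
have F_comp_n h : cont_iso01 len h -> F (h \o n).
  by apply: cont_iso01_comp cn _ => x y /iffn.
have quot_ext_p h P : cont_iso01 len h -> h (p (repr P)) = quot_ext (h \o n) P.
  move=> Hh; have [ce he] := beta_extP (F_comp_n _ Hh); have [ch _ _] := Hh.
  by apply: hp => // e; rewrite he.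
exists (p \o repr); split.
- apply: (continuous_separating (P := cont_iso01 len) (phi := id) cnE hnE).
  + by move=> h [].
  + by move=> q q'; exact: (cont_iso01_separate R cnE hnE rr rt cl anti).
  + move=> h Hh; have -> : h \o (p \o repr) = quot_ext (h \o n).
      by apply: funext => P; exact: quot_ext_p.
    exact: quot_ext_continuous (F_comp_n _ Hh).
- move=> P P' lq; apply: contrapT => /(order_urysohn R cnE hnE rr rt cl)[h [Hh lt]].
  have := (le_quotP _ _).1 lq _ (F_comp_n _ Hh).
  by rewrite -!quot_ext_p // leNgt lt.
- move=> x; apply: contrapT => /(cont_iso01_separate R cnE hnE rr rt cl anti)[h [Hh]].
  apply; rewrite /= quot_ext_p // quot_ext_proj; last exact: F_comp_n.
  exact: (beta_extP (F_comp_n _ Hh)).2.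
Qed.

End BetaQuotient.

Local Close Scope quotient_scope.
Unset Implicit Arguments.

Theorem mainTheorem10 (R : realType) (E : topologicalType) (le : E -> E -> Prop)
    (bE : topologicalType) (b : E -> bE)
    (nE : topologicalType) (len : nE -> nE -> Prop) (n : E -> nE) :
  completely_regularly_ordered R le ->
  stone_cech R b ->
  nachbin_compactification R le len n ->
  T2_order_compactification le (@le_quot R E le bE b) (beta_proj R le b \o b) /\
  compactification_equiv (@le_quot R E le bE b) (beta_proj R le b \o b) len n.
Proof.
move=> hcro hsc hna; split; first exact: beta_quot_compactification.
by split; [exact: nachbin_to_beta_quot | exact: beta_quot_to_nachbin].
Qed.
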